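(* Let $C=(c_{ij})_{1\le i,j\le 8}$ be the Cartan matrix of type $E_8$: $c_{ii}=2$, $c_{ij}=c_{ji}=-1$ for $\{i,j\} \in \{\{1,3\},\{3,4\},\{4,5\},\{5,6\},\{6,7\},\{7,8\},\{2,4\}\}$, and $c_{ij}=0$ otherwise. Let $e_1,\dots,e_8$ be the standard basis of $\mathbb{Z}^8$, define $s_i \in \mathrm{GL}_8(\mathbb{Z})$ by $s_i(e_j) = e_j - c_{ji} e_i$, and let $w = s_7 s_8 s_6 s_2 s_1 s_3 s_4 s_5$. Then for every prime power $q$, the group $\mathbb{Z}^8/(q w - \mathrm{id})\mathbb{Z}^8$ is cyclic of order $\Phi_{30}(q) = q^8+q^7-q^5-q^4-q^3+q+1$, the $30$-th cyclotomic polynomial evaluated at $q$. *)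

From HB Require Import structures.
From mathcomp Require Import all_boot all_order all_algebra.
Set Implicit Arguments. Unset Strict Implicit. Unset Printing Implicit Defensive.
Import Order.TTheory GRing.Theory Num.Theory.
Local Open Scope ring_scope.

(* Edges of the E8 Dynkin diagram (Bourbaki numbering, 1-based). *)
Definition E8_edge (i j : nat) : bool :=
  [|| (i == 1) && (j == 3)%N, (i == 3) && (j == 4)%N, (i == 4) && (j == 5)%N,
      (i == 5) && (j == 6)%N, (i == 6) && (j == 7)%N, (i == 7) && (j == 8)%N
    | (i == 2) && (j == 4)%N]%N.

(* Cartan matrix C of type E8; entry (i,j) with 0-based ordinals stands for c_{i+1,j+1}. *)
Definition cartanE8 : 'M[int]_8 :=
  \matrix_(i, j) (if i == j then 2
                  else if E8_edge i.+1 j.+1 || E8_edge j.+1 i.+1 then -1 else 0).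

(* Simple reflection s_i (0-based index) acting on column vectors:
   s_i(e_j) = e_j - c_{ji} e_i, i.e. column j of the matrix is e_j - c_{ji} e_i. *)
Definition simple_refl (i : 'I_8) : 'M[int]_8 :=
  \matrix_(k, j) ((k == j)%:R - cartanE8 j i * (k == i)%:R).

Definition s (n : nat) : 'M[int]_8 := simple_refl (inord n.-1).

Definition wE8 : 'M[int]_8 :=
  s 7 *m s 8 *m s 6 *m s 2 *m s 1 *m s 3 *m s 4 *m s 5.

Definition qw_minus_id (q : nat) : 'M[int]_8 := (q%:Z) *: wE8 - 1%:M.

(* Phi_30(q) = q^8+q^7-q^5-q^4-q^3+q+1 (as a natural number; positive for q >= 1) *)
Definition Phi30 (q : nat) : nat :=
  (q ^ 8 + q ^ 7 + q + 1 - (q ^ 5 + q ^ 4 + q ^ 3))%N.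

From HB Require Import structures.
From mathcomp Require Import all_boot all_order all_algebra.
From mathcomp Require Import ring zify.
Set Implicit Arguments. Unset Strict Implicit. Unset Printing Implicit Defensive.
Import Order.TTheory GRing.Theory Num.Theory.
Local Open Scope ring_scope.

(* The Coxeter element w of E8 is conjugate over Z to the companion matrix C of
   Phi_30(t) = t^8 + t^7 - t^5 - t^4 - t^3 + t + 1: there is P in GL_8(Z) with
   P w = C P.  Hence q w - 1 = P^-1 (q C - 1) P, and the cokernel of q w - 1 is
   isomorphic to that of q C - 1.
   For the companion matrix the cokernel is computed by hand: the functional
   g(y) = sum_i q^(7-i) y_i satisfies g (q C - 1) = -Phi_30(q) e_7^T and
   g(e_7) = 1, and every y with Phi_30(q) | g(y) is hit by q C - 1, the preimage
   being obtained by solving the triangular system coordinate by coordinate.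
   Thus y |-> g(y) mod Phi_30(q) identifies Z^8/(q C - 1)Z^8 with Z/Phi_30(q). *)

Definition cyclic_coker n (M : 'M[int]_n) (N : nat) : Prop :=
  exists f : 'cV[int]_n -> 'Z_N,
    [/\ (forall u v, f (u + v) = f u + f v),
        (forall y, exists x, f x = y)
      & (forall v, f v = 0 <-> exists u, v = M *m u)].

Lemma int_Zp_eq0 (N : nat) (z : int) : (1 < N)%N ->
  (z%:~R : 'Z_N) = 0 <-> (N%:Z %| z)%Z.
Proof.
move=> N_gt1; have N_gt0 : (0 < N%:Z) by rewrite ltz_nat ltnW.
have [m mE] : exists m : nat, (z %% N)%Z = m.
  by exists `|(z %% N)%Z|%N; rewrite gez0_abs // modz_ge0 // gt_eqF.
have m_lt : (m < N)%N by rewrite -ltz_nat -mE ltz_pmod.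
have N0 : (N%:~R : 'Z_N) = 0 := pchar_Zp N_gt1.
have -> : (z%:~R : 'Z_N) = m%:R.
  by rewrite {1}(divz_eq z N) intrD intrM mE N0 mulr0 add0r.
split => [m0 | /dvdz_mod0P]; last by rewrite mE => -[->].
apply/dvdz_mod0P; rewrite mE; congr Posz.
by move/(congr1 val): m0; rewrite /= val_Zp_nat // modn_small.
Qed.

Lemma cyclic_coker_criterion n (N : nat) (M : 'M[int]_n)
    (g : 'rV[int]_n) (b : 'cV[int]_n) (h : 'rV[int]_n) :
  (1 < N)%N -> g *m b = 1%:M -> g *m M = N%:Z *: h ->
  (forall v : 'cV_n, (N%:Z %| ((g *m v) 0 0)%R)%Z -> exists u, v = M *m u) ->
  cyclic_coker M N.
Proof.
move=> N_gt1 gb1 gMN solve.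
exists (fun v => ((g *m v) 0 0)%:~R); split.
- by move=> u v; rewrite mulmxDr mxE intrD.
- move=> y; exists ((val y)%:Z *: b).
  by rewrite -scalemxAr gb1 !mxE mulr1; exact: natr_Zp.
- move=> v; rewrite int_Zp_eq0 //; split => [/solve // | [u ->]].
  by rewrite mulmxA gMN -scalemxAl mxE dvdz_mulr.
Qed.

Lemma cyclic_coker_conj n (N : nat) (M P Q : 'M[int]_n) :
  Q *m P = 1%:M -> cyclic_coker M N -> cyclic_coker (Q *m M *m P) N.
Proof.
move=> QP [f [fD f_surj f_ker]]; have PQ := mulmx1C QP.
exists (fun v => f (P *m v)); split.
- by move=> u v; rewrite mulmxDr fD.
- move=> y; have [x <-] := f_surj y.
  by exists (Q *m x); rewrite mulmxA PQ mul1mx.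
- move=> v; rewrite f_ker; split => [[u Pv] | [u ->]].
  + exists (Q *m u); rewrite -[v]mul1mx -QP -mulmxA Pv.
    by rewrite -!mulmxA [P *m (Q *m u)]mulmxA PQ mul1mx.
  + by exists (P *m u); rewrite !mulmxA PQ mul1mx.
Qed.

(* Explicit integer matrices given by their list of rows; products of such
   matrices can be evaluated by computation on the lists. *)
Definition mx_of_rows n (rows : seq (seq int)) : 'M[int]_n :=
  \matrix_(i, j) nth 0 (nth [::] rows i) j.

Definition rows_of n (F : nat -> nat -> int) : seq (seq int) :=
  mkseq (fun i => mkseq (F i) n) n.

Definition rows_mul n (A B : seq (seq int)) : seq (seq int) :=
  rows_of n (fun i j =>
    foldr (fun l acc => nth 0 (nth [::] A i) l * nth 0 (nth [::] B l) j + acc)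
          0 (iota 0 n)).

Lemma mx_of_rows_of n F : mx_of_rows n (rows_of n F) = \matrix_(i, j) F i j.
Proof. by apply/matrixP => i j; rewrite !mxE !nth_mkseq. Qed.

Lemma mx_of_rows1 n : mx_of_rows n (rows_of n (fun i j => (i == j)%:R)) = 1%:M.
Proof. by rewrite mx_of_rows_of; apply/matrixP => i j; rewrite !mxE. Qed.

Lemma mx_of_rowsM n A B :
  mx_of_rows n A *m mx_of_rows n B = mx_of_rows n (rows_mul n A B).
Proof.
rewrite mx_of_rows_of; apply/matrixP => i j; rewrite !mxE.
under eq_bigr do rewrite !mxE.
rewrite -(big_mkord xpredT (fun l => nth 0 (nth [::] A i) l * nth 0 (nth [::] B l) j)).
rewrite /index_iota subn0; elim: (iota 0 n) => [|l r IH]; first by rewrite big_nil.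
by rewrite big_cons IH.
Qed.

Definition companion n (a : seq int) : 'M[int]_n :=
  mx_of_rows n (rows_of n (fun i j => (i == j.+1)%:R - (j == n.-1)%:R * a`_i)).

Definition phi30_coefs : seq int := [:: 1; 1; 0; -1; -1; -1; 0; 1].

Definition phi30z (t : int) : int := t ^+ 8 + t ^+ 7 - t ^+ 5 - t ^+ 4 - t ^+ 3 + t + 1.

(* The truncated subtraction in Phi30 is harmless for q >= 2. *)
Lemma Phi30_ge (q : nat) : (1 < q)%N -> (q ^ 5 + q ^ 4 + q ^ 3 <= q ^ 8 + q ^ 7)%N.
Proof.
move=> q_gt1; have q_gt0 : (0 < q)%N by apply: ltnW.
have h34 : (q ^ 3 <= q ^ 4)%N by rewrite leq_pexp2l.
have h45 : (q ^ 4 * 2 <= q ^ 5)%N by rewrite [(q ^ 5)%N]expnSr leq_mul2l q_gt1 orbT.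
have h57 : (q ^ 5 <= q ^ 7)%N by rewrite leq_pexp2l.
have h58 : (q ^ 5 <= q ^ 8)%N by rewrite leq_pexp2l.
lia.
Qed.

Lemma Phi30_int (q : nat) : (1 < q)%N -> (Phi30 q)%:Z = phi30z q%:Z.
Proof.
move=> q_gt1; rewrite /Phi30 -subzn; last first.
  by apply: leq_trans (Phi30_ge q_gt1) _; rewrite -addnA leq_addr.
rewrite !PoszD -!natz !natrX /phi30z; ring.
Qed.

(* Z/Phi_30(q) is a genuine quotient ring 'Z_(Phi30 q). *)
Lemma Phi30_gt1 (q : nat) : (1 < q)%N -> (1 < Phi30 q)%N.
Proof. by move=> q_gt1; have := Phi30_ge q_gt1; rewrite /Phi30; lia. Qed.

(* Back substitution for (q C - 1) u = x with u_(n-1) = -k: the i-th equation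
   determines u_i from u_(i-1) for i < n-1; the last equation then holds
   exactly when sum_i q^(n-1-i) x_i = k * (reversed polynomial at q). *)
Fixpoint companion_solve (a : seq int) (q k : int) (x : nat -> int) (i : nat) : int :=
  q * ((if i is i'.+1 then companion_solve a q k x i' else 0) + a`_i * k) - x i.

Lemma colE n (v : 'cV[int]_n.+1) : v = \col_i v (inord i) 0.
Proof. by apply/matrixP => i j; rewrite !mxE ord1 inord_val. Qed.

Lemma companion_phi30_coker (q : nat) : (1 < q)%N ->
  cyclic_coker (q%:Z *: companion 8 phi30_coefs - 1%:M) (Phi30 q).
Proof.
move=> q_gt1; set Q := q%:Z.
pose g : 'rV[int]_8 := \row_j Q ^+ (7 - j).
apply: (@cyclic_coker_criterion _ _ _ g (\col_i (i == 7 :> nat)%:R)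
                                (- \row_j (j == 7 :> nat)%:R)).
- exact: Phi30_gt1.
- apply/matrixP => i j; rewrite !ord1 !mxE !big_ord_recr big_ord0 /= !mxE /=.
  by rewrite /subn /=; ring.
- rewrite Phi30_int // mulmxDr mulmxN mulmx1 -scalemxAr.
  apply/matrixP => i j; rewrite ord1 !mxE !big_ord_recr big_ord0 /= !mxE /=.
  by case: j => [[|[|[|[|[|[|[|[|//]]]]]]]] Hj] /=; rewrite /subn /phi30z /=; ring.
- move=> v /dvdzP [k gv].
  pose x (n : nat) : int := v (inord n) 0; have vE : v = \col_i x i by exact: colE.
  rewrite vE in gv *; clearbody x; move: gv; set G := (g *m _) 0 0 => gv.
  pose u i := if i == 7%N then - k else companion_solve phi30_coefs Q k x i.
  exists (\col_i u i); apply/matrixP => i j; rewrite ord1.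
  apply/eqP; rewrite -subr_eq0; apply/eqP.
  (* all coordinates but the last are solved exactly; the last one uses gv *)
  transitivity ((i == 7 :> nat)%:R * (G - k * Phi30 q)); last first.
    by rewrite gv subrr mulr0.
  rewrite Phi30_int // mulmxDl mulNmx mul1mx -scalemxAl /G.
  rewrite !mxE !big_ord_recr !big_ord0 /= !mxE /=.
  by case: i => [[|[|[|[|[|[|[|[|//]]]]]]]] Hi] /=; rewrite /subn /phi30z /u /=; ring.
Qed.

Definition cartan_entry (j i : nat) : int :=
  if j == i then 2 else if E8_edge j.+1 i.+1 || E8_edge i.+1 j.+1 then -1 else 0.

Definition refl_rows (i : nat) : seq (seq int) :=
  rows_of 8 (fun k j => (k == j)%:R - cartan_entry j i * (k == i)%:R).

Lemma s_rows i : (i < 8)%N -> s i.+1 = mx_of_rows 8 (refl_rows i).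
Proof.
move=> i_lt8; rewrite /s mx_of_rows_of; apply/matrixP => k j.
by rewrite !mxE -!(inj_eq val_inj) /= !inordK.
Qed.

(* A base change P (with inverse P^-1) conjugating w to the companion matrix. *)
Definition base_rows : seq (seq int) :=
 [:: [:: 0; 0; -1; 1; 0; 0; -1; 1]; [:: 0; -1; -1; 1; 1; 0; -1; 0];
     [:: -1; -1; 0; 0; 2; -1; 0; 0]; [:: -1; -1; 0; 0; 1; 0; 0; 0];
     [:: 0; 0; 0; -1; 1; 0; 0; 0]; [:: 0; 0; 1; -1; 0; 0; 0; 0];
     [:: 0; 1; 0; 0; -1; 0; 0; 0]; [:: 1; 0; -1; 1; -1; 0; 0; 0]].

Definition base_inv_rows : seq (seq int) :=
 [:: [:: 0; 0; 0; -1; 0; 0; -1; 0]; [:: 0; 0; 0; -1; 0; -1; 0; -1];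
     [:: 0; 0; 0; -1; -1; 0; -1; -1]; [:: 0; 0; 0; -1; -1; -1; -1; -1];
     [:: 0; 0; 0; -1; 0; -1; -1; -1]; [:: 0; 0; -1; 0; 0; -1; -1; -1];
     [:: 0; -1; 0; 0; 0; -1; -1; 0]; [:: 1; -1; 0; 0; 0; 0; -1; 0]].

Lemma base_inv_rowsK : mx_of_rows 8 base_inv_rows *m mx_of_rows 8 base_rows = 1%:M.
Proof. by rewrite mx_of_rowsM -mx_of_rows1. Qed.

Lemma coxeterE8_companion :
  mx_of_rows 8 base_rows *m wE8 = companion 8 phi30_coefs *m mx_of_rows 8 base_rows.
Proof. by rewrite /wE8 !s_rows // !mx_of_rowsM. Qed.

Lemma qw_minus_id_conj (q : nat) :
  qw_minus_id q = mx_of_rows 8 base_inv_rows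
                  *m (q%:Z *: companion 8 phi30_coefs - 1%:M) *m mx_of_rows 8 base_rows.
Proof.
set Pinv := mx_of_rows 8 base_inv_rows; set P := mx_of_rows 8 base_rows.
have wE : wE8 = Pinv *m companion 8 phi30_coefs *m P.
  by rewrite -mulmxA -coxeterE8_companion mulmxA base_inv_rowsK mul1mx.
rewrite /qw_minus_id wE mulmxDr mulmxN mulmx1 mulmxDl mulNmx base_inv_rowsK.
by rewrite -scalemxAr -scalemxAl.
Qed.

Theorem mainTheorem6 (q : nat)
  (hq : exists p k : nat, [/\ prime p, (0 < k)%N & q = (p ^ k)%N]) :
  exists f : 'cV[int]_8 -> 'Z_(Phi30 q),
    [/\ (forall u v, f (u + v) = f u + f v),
        (forall y, exists x, f x = y)
      & (forall v, f v = 0 <-> exists u, v = qw_minus_id q *m u)].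
Proof.
have q_gt1 : (1 < q)%N.
  case: hq => p [k [p_prime k_gt0 ->]].
  by rewrite (leq_trans (prime_gt1 p_prime)) // -{1}(expn1 p) leq_pexp2l // prime_gt0.
rewrite qw_minus_id_conj.
exact: cyclic_coker_conj base_inv_rowsK (companion_phi30_coker q_gt1).
Qed.
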